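(* Let $\mathcal{H}=(\mathcal{V},\mathcal{E})$ be a connected hypergraph with a vertex $w$ and two proper subsets $\mathcal{V}_1,\mathcal{V}_2$ of $\mathcal{V}$ such that $\mathcal{V}_1\cup\mathcal{V}_2=\mathcal{V}$, $\mathcal{V}_1\cap\mathcal{V}_2=\{w\}$, and every $e\in\mathcal{E}$ satisfies $w\in e$ or $e\subseteq\mathcal{V}_i$ for some $i\in\{1,2\}$. Let $\mathcal{I}_{(\mathcal{V}_1,\mathcal{V}_2)}(\mathcal{H})$ be the set of those $\mathcal{V}_0\in\mathcal{I}(\mathcal{H})$ with $\mathcal{V}_i\subseteq\mathcal{V}_0$ for some $i\in\{1,2\}$. Then $(\lambda-1)^2$ divides $P(\mathcal{H},\lambda)$ if and only if $\lambda^2$ divides the polynomial $\sum_{\mathcal{V}_0\in\mathcal{I}_{(\mathcal{V}_1,\mathcal{V}_2)}(\mathcal{H})}P(\mathcal{H}-\mathcal{V}_0,\lambda)$.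
   Context: A hypergraph $\mathcal{H}=(\mathcal{V},\mathcal{E})$ consists of a finite vertex set $\mathcal{V}$ and a set $\mathcal{E}$ of subsets of $\mathcal{V}$, each of size at least $1$, called edges. For a positive integer $\lambda$, a weak proper $\lambda$-colouring of $\mathcal{H}$ is a map $\phi:\mathcal{V}\to\{1,\dots,\lambda\}$ such that $|\{\phi(v):v\in e\}|>1$ for every $e\in\mathcal{E}$. $P(\mathcal{H},\lambda)$ denotes the number of weak proper $\lambda$-colourings; it is a polynomial in $\lambda$ (equal to $1$ for the hypergraph with no vertices). $\mathcal{H}$ is connected if for any two vertices $v_1,v_2$ there is a sequence of edges $e_0,\dots,e_k$ with $v_1\in e_0$, $v_2\in e_k$, $e_i\cap e_{i+1}\ne\emptyset$. For $\mathcal{V}_0\subseteq\mathcal{V}$, $\mathcal{H}[\mathcal{V}_0]$ has vertex set $\mathcal{V}_0$ and edge set $\{e\in\mathcal{E}:e\subseteq\mathcal{V}_0\}$; $\mathcal{H}-\mathcal{V}_0=\mathcal{H}[\mathcal{V}\setminus\mathcal{V}_0]$; $\mathcal{I}(\mathcal{H})$ is the set of subsets $\mathcal{V}_0\subseteq\mathcal{V}$ such that $\mathcal{H}[\mathcal{V}_0]$ has no edges. *)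

From HB Require Import structures.
From mathcomp Require Import all_boot all_order all_algebra.
Set Implicit Arguments. Unset Strict Implicit. Unset Printing Implicit Defensive.
Import Order.TTheory GRing.Theory Num.Theory.

Local Open Scope ring_scope.
Section Hyper.
Variable T : finType.

Definition hypergraph (V : {set T}) (E : {set {set T}}) : Prop :=
  forall e, e \in E -> (e \subset V) /\ (e != set0).

Definition hconnected (V : {set T}) (E : {set {set T}}) : Prop :=
  forall v1 v2, v1 \in V -> v2 \in V ->
    exists (e0 : {set T}) (s : seq {set T}),
      [/\ e0 \in E, all (fun e => e \in E) s, v1 \in e0, v2 \in last e0 s
        & path (fun a b : {set T} => a :&: b != set0) e0 s].

Definition is_wproper (V : {set T}) (E : {set {set T}}) (n : nat)
  (f : {ffun {x : T | x \in V} -> 'I_n}) : bool :=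
  [forall e in E, exists x, exists y,
     [&& val x \in e, val y \in e & f x != f y]].

Definition ncol (V : {set T}) (E : {set {set T}}) (n : nat) : nat :=
  #|[set f : {ffun {x : T | x \in V} -> 'I_n} | @is_wproper V E n f]|.

(* the chromatic polynomial P(H, lambda) in Q[lambda]: the Lagrange
   interpolation polynomial of n |-> ncol V E n at n = 0, ..., #|V|
   (ncol is a polynomial function of degree <= #|V|, so this is the
   unique polynomial agreeing with it on all naturals). *)
Definition chrompoly (V : {set T}) (E : {set {set T}}) : {poly rat} :=
  let N := #|V| in
  \sum_(i < N.+1)
    ((ncol V E i)%:R *:
      \prod_(j < N.+1 | j != i)
        ((((i : nat)%:R - (j : nat)%:R) : rat)^-1 *: ('X - ((j : nat)%:R)%:P))).

(* H - V0 = H[V \ V0] : edges of the induced subhypergraph *)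
Definition induced_edges (E : {set {set T}}) (W : {set T}) : {set {set T}} :=
  [set e in E | e \subset W].

Definition indep (V : {set T}) (E : {set {set T}}) (V0 : {set T}) : bool :=
  (V0 \subset V) && [forall e in E, ~~ (e \subset V0)].

End Hyper.

From HB Require Import structures.
From mathcomp Require Import all_boot all_order all_algebra perm.
Set Implicit Arguments. Unset Strict Implicit. Unset Printing Implicit Defensive.
Import Order.TTheory GRing.Theory Num.Theory.

(* In a weak (lambda+1)-colouring the class of the last colour is a set V0 in I(H)
   and the rest is a lambda-colouring of H - V0, so P(H, X+1) is the sum of
   P(H - V0, X) over I(H); thus (X-1)^2 | P(H) iff X^2 divides that sum.  By
   symmetry among the colours of w, the terms with w 
otin V0 add up to
   X P(H, X+1) / (X+1), a multiple of X^2 because P(H, 1) = 0.  A term with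
   w \in V0 but neither V_i inside V0 is P(H - V0), and H - V0 is the disjoint
   union of nonempty hypergraphs on V_1 \ V0 and V_2 \ V0, so it is a product of
   two multiples of X.  Only the terms indexed by I_(V1,V2)(H) remain.  As P(H) is
   defined by interpolation, all identities are proved for the counting function
   ncol, which the same recursion shows to be polynomial of degree at most |V|. *)

Lemma eq_card_in_bij (aT rT : finType) (A : {set aT}) (B : {set rT}) (f : aT -> rT) :
  {in A &, injective f} -> (forall a, a \in A -> f a \in B) ->
  (forall b, b \in B -> exists2 a, a \in A & b = f a) -> #|A| = #|B|.
Proof.
move=> inj fAB fBA; rewrite -(card_in_imset inj); apply: eq_card => b.
apply/imsetP/idP => [[a aA ->]|bB]; first exact: fAB.
by have [a aA ->] := fBA b bB; exists a.
Qed.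

Section Colourings.
Variables (T : finType) (K : nat).
Implicit Types (W A B : {set T}) (F : {set {set T}}) (f g : {ffun T -> 'I_K.+1}).

(* Colourings of every vertex set W with every palette 'I_n, n <= K.+1, are
   encoded in the single type {ffun T -> 'I_K.+1}: colours below n on W, 0 off W. *)
Definition coloured_on W n f := [forall x, if x \in W then f x < n else f x == ord0].

Definition edges_split F f :=
  [forall e in F, exists x, exists y, [&& x \in e, y \in e & f x != f y]].

Definition colourings W F n := [set f | coloured_on W n f && edges_split F f].

Lemma coloured_on_in W n f x : coloured_on W n f -> x \in W -> f x < n.
Proof. by move=> /forallP /(_ x); case: (x \in W). Qed.

Lemma coloured_on_out W n f x : coloured_on W n f -> x \notin W -> f x = ord0.
Proof. by move=> /forallP /(_ x) /[swap] /negbTE ->; move/eqP. Qed.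

Lemma coloured_onI W n f :
  (forall x, x \in W -> f x < n) -> (forall x, x \notin W -> f x = ord0) ->
  coloured_on W n f.
Proof.
move=> fin fout; apply/forallP => x.
by case: (boolP (x \in W)) => [/fin|/fout ->].
Qed.

Lemma edges_splitP F f :
  reflect (forall e, e \in F -> exists x, exists y, [/\ x \in e, y \in e & f x != f y])
          (edges_split F f).
Proof.
apply: (iffP forallP) => sf e.
  move=> eF; have := sf e; rewrite eF => /existsP [x /existsP [y /and3P [xe ye nxy]]].
  by exists x, y.
apply/implyP => /sf [x [y [xe ye nxy]]].
by apply/existsP; exists x; apply/existsP; exists y; rewrite xe ye.
Qed.

Lemma edges_split_transfer F F' f g :
  (forall e, e \in F' -> e \in F /\ {in e &, forall x y, f x != f y -> g x != g y}) ->
  edges_split F f -> edges_split F' g.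
Proof.
move=> FF' /edges_splitP sf; apply/edges_splitP => e /FF' [eF fg].
by have [x [y [xe ye nxy]]] := sf e eF; exists x, y; rewrite xe ye fg.
Qed.

Lemma ncol_colourings W F n : (forall e, e \in F -> e \subset W) -> n <= K.+1 ->
  ncol W F n = #|colourings W F n|.
Proof.
move=> FW nK.
pose ext (c : {ffun {x : T | x \in W} -> 'I_n}) : {ffun T -> 'I_K.+1} :=
  [ffun x => if insub x is Some y then widen_ord nK (c y) else ord0].
have extE c (y : {x : T | x \in W}) : ext c (val y) = widen_ord nK (c y).
  by rewrite ffunE valK.
have extN c x : x \notin W -> ext c x = ord0 by move=> xW; rewrite ffunE insubN.
apply: (@eq_card_in_bij _ _ _ _ ext).
- move=> g1 g2 _ _ eq12; apply/ffunP => y; apply/val_inj.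
  by have /(congr1 val) := congr1 (fun f => f (val y)) eq12; rewrite /= !extE.
- move=> c; rewrite !inE => /forallP sc; apply/andP; split.
    apply: coloured_onI => [x xW|x /extN //].
    by rewrite -[x]/(val (Sub x xW : {x : T | x \in W})) extE /=.
  apply/edges_splitP => e eF.
  move: (implyP (sc e) eF) => /existsP [x /existsP [y /and3P [xe ye nxy]]].
  exists (val x), (val y); rewrite xe ye !extE; by split.
- move=> f; rewrite inE => /andP [cf /edges_splitP sf].
  have fW (y : {x : T | x \in W}) : f (val y) < n := coloured_on_in cf (valP y).
  exists [ffun y => Ordinal (fW y)].
    rewrite inE; apply/forallP => e; apply/implyP => eF.
    have [x [y [xe ye nxy]]] := sf e eF.
    have [xW yW] := (subsetP (FW e eF) x xe, subsetP (FW e eF) y ye).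
    apply/existsP; exists (Sub x xW); apply/existsP; exists (Sub y yW).
    rewrite /= xe ye !ffunE /=.
    by apply: contra nxy => /eqP/(congr1 val) /= exy; apply/eqP/val_inj.
  apply/ffunP => x; rewrite ffunE; case: insubP => [y _ <-|xW].
    by rewrite ffunE; apply/val_inj.
  by rewrite (coloured_on_out cf xW).
Qed.

Definition top_class W f := [set x in W | f x == ord_max].

Definition paint (V0 : {set T}) g : {ffun T -> 'I_K.+1} :=
  [ffun x => if x \in V0 then ord_max else g x].

Definition unpaint (V0 : {set T}) f : {ffun T -> 'I_K.+1} :=
  [ffun x => if x \in V0 then ord0 else f x].

Section TopClass.
Variables (W : {set T}) (F : {set {set T}}).
Hypothesis FW : forall e, e \in F -> e \subset W.

Lemma indep_top_class f : f \in colourings W F K.+1 -> indep W F (top_class W f).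
Proof.
rewrite inE => /andP [_ /edges_splitP sf]; apply/andP; split.
  by apply/subsetP => x; rewrite inE => /andP [].
apply/forallP => e; apply/implyP => eF; apply/negP => /subsetP eV0.
have [x [y [xe ye]]] := sf e eF.
by move: (eV0 x xe) (eV0 y ye); rewrite !inE => /andP [_ /eqP ->] /andP [_ /eqP ->] /eqP.
Qed.

Lemma paint_colouring (V0 : {set T}) g : indep W F V0 ->
  g \in colourings (W :\: V0) (induced_edges F (W :\: V0)) K ->
  paint V0 g \in colourings W F K.+1.
Proof.
case/andP => V0W /forallP iV0; rewrite !inE => /andP [cg sg]; apply/andP; split.
  apply: coloured_onI => x; rewrite ffunE.
    by case: ifP => // xV0 xW; rewrite ltnW // (coloured_on_in cg) // !inE xV0.
  move=> xW; rewrite ifN ?(coloured_on_out cg) ?inE ?(negbTE xW) ?andbF //.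
  by apply: contra xW; apply: (subsetP V0W).
apply/edges_splitP => e eF; case: (boolP (e \subset W :\: V0)) => [eWV0|].
  have eF' : e \in induced_edges F (W :\: V0) by rewrite inE eF eWV0.
  have [x [y [xe ye nxy]]] := edges_splitP _ _ sg e eF'.
  exists x, y; rewrite /paint !ffunE.
  move: (subsetP eWV0 x xe) (subsetP eWV0 y ye); rewrite !inE.
  by case/andP => /negbTE -> _ /andP [/negbTE -> _].
case/subsetPn => x xe; rewrite inE (subsetP (FW eF) x xe) andbT negbK => xV0.
have /subsetPn [y ye yV0] := implyP (iV0 e) eF.
exists x, y; rewrite /paint !ffunE xV0 (negbTE yV0) neq_ltn /=; split=> //.
by rewrite (coloured_on_in cg) ?orbT // !inE yV0 (subsetP (FW eF) y ye).
Qed.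

Lemma unpaint_colouring f (V0 := top_class W f) : f \in colourings W F K.+1 ->
  unpaint V0 f \in colourings (W :\: V0) (induced_edges F (W :\: V0)) K.
Proof.
rewrite inE => /andP [cf sf]; rewrite inE; apply/andP; split.
  have V0E x : (x \in V0) = (x \in W) && (f x == ord_max) by rewrite inE.
  apply: coloured_onI => x; rewrite /unpaint ffunE in_setD.
    case/andP => xV0 xW; rewrite (negbTE xV0) ltn_neqAle -ltnS (coloured_on_in cf) // andbT.
    by apply: contraNneq xV0 => fx; rewrite V0E xW; apply/eqP/val_inj.
  by case: ifP => //= _ xW; apply: coloured_on_out cf xW.
apply: edges_split_transfer sf => e; rewrite inE => /andP [eF eWV0]; split=> // x y xe ye.
have fE z : z \in e -> unpaint V0 f z = f z.
  by move=> ze; move: (subsetP eWV0 z ze); rewrite /unpaint ffunE inE => /andP [/negbTE ->].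
by rewrite !fE.
Qed.

Lemma top_class_paint (V0 : {set T}) g : V0 \subset W ->
  coloured_on (W :\: V0) K g -> top_class W (paint V0 g) = V0.
Proof.
move=> V0W cg; apply/setP => x; rewrite !inE /paint ffunE.
case: ifP => [xV0|xV0]; first by rewrite (subsetP V0W) ?eqxx.
apply/andP => -[xW /eqP gx]; have := coloured_on_in cg (x := x).
by rewrite !inE xV0 xW gx ltnn => /(_ isT).
Qed.

Lemma paintK (V0 : {set T}) g : coloured_on (W :\: V0) K g -> unpaint V0 (paint V0 g) = g.
Proof.
move=> cg; apply/ffunP => x; rewrite /unpaint /paint !ffunE.
by case: (boolP (x \in V0)) => // xV0; rewrite (coloured_on_out cg) // !inE xV0.
Qed.

Lemma unpaintK f : paint (top_class W f) (unpaint (top_class W f) f) = f.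
Proof.
apply/ffunP => x; rewrite /unpaint /paint !ffunE.
by case: (boolP (x \in top_class W f)) => // /setIdP [_ /eqP ->].
Qed.

Lemma card_top_class (V0 : {set T}) :
  #|[set f in colourings W F K.+1 | top_class W f == V0]| =
  if indep W F V0 then #|colourings (W :\: V0) (induced_edges F (W :\: V0)) K| else 0.
Proof.
case: ifP => [iV0|niV0]; last first.
  apply/eqP; rewrite cards_eq0; apply/eqP/setP => f; rewrite in_set0 in_set.
  by apply/negbTE/andP => -[/indep_top_class + /eqP fV0]; rewrite fV0 niV0.
have V0W : V0 \subset W by case/andP: iV0.
apply/esym/(@eq_card_in_bij _ _ _ _ (paint V0)).
- move=> g1 g2; rewrite !inE => /andP [c1 _] /andP [c2 _] /(congr1 (unpaint V0)).
  by rewrite !paintK.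
- move=> g gC; rewrite inE paint_colouring //=.
  by move: gC; rewrite inE => /andP [cg _]; rewrite top_class_paint.
move=> f; rewrite inE => /andP [fC /eqP fV0]; exists (unpaint V0 f).
  by rewrite -fV0; apply: unpaint_colouring.
by rewrite -fV0 unpaintK.
Qed.

Lemma card_colourings_by_top_class (Q : pred {set T}) :
  #|[set f in colourings W F K.+1 | Q (top_class W f)]| =
  \sum_(V0 | indep W F V0 && Q V0) #|colourings (W :\: V0) (induced_edges F (W :\: V0)) K|.
Proof.
rewrite -sum1_card (partition_big (top_class W) Q) => [|f]; last by rewrite inE => /andP [].
rewrite [RHS]big_mkcondl; apply: eq_bigr => V0 QV0; rewrite -card_top_class -sum1_card.
by apply: eq_bigl => f; rewrite !inE; case: eqP => [->|]; rewrite ?QV0 ?andbT ?andbF.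
Qed.

Lemma card_colourings_by_colour_at w (P : pred 'I_K.+1) :
  #|[set f in colourings W F K.+1 | P (f w)]| =
  \sum_(c | P c) #|[set f in colourings W F K.+1 | f w == c]|.
Proof.
rewrite -sum1_card (partition_big (fun f => f w) P) => [|f]; last by rewrite inE => /andP [].
apply: eq_bigr => c Pc; rewrite -sum1_card; apply: eq_bigl => f; rewrite !inE.
by case: eqP => [->|]; rewrite ?Pc ?andbT ?andbF.
Qed.

Lemma card_colourings_colour_at w (c : 'I_K.+1) : w \in W ->
  #|[set f in colourings W F K.+1 | f w == c]| =
  #|[set f in colourings W F K.+1 | f w == ord_max]|.
Proof.
move=> wW; pose swap f : {ffun T -> 'I_K.+1} :=
  [ffun x => if x \in W then tperm c ord_max (f x) else f x].
have swapK : involutive swap.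
  by move=> f; apply/ffunP => x; rewrite !ffunE; case: (boolP (x \in W)) => // _; rewrite tpermK.
have swapC f : f \in colourings W F K.+1 -> swap f \in colourings W F K.+1.
  rewrite !inE => /andP [cf sf]; apply/andP; split.
    apply/forallP => x; rewrite ffunE; have := forallP cf x; case: ifP => //.
  apply: edges_split_transfer sf => e eF; split=> // x y xe ye.
  rewrite !ffunE !(subsetP (FW eF)) //.
  by apply: contra => /eqP /perm_inj ->.
apply: (@eq_card_in_bij _ _ _ _ swap).
- by move=> f g _ _ /(congr1 swap); rewrite !swapK.
- move=> f; rewrite in_set => /andP [/swapC sfC /eqP fw].
  by rewrite in_set sfC /= ffunE wW fw tpermL.
move=> f; rewrite inE => /andP [fC /eqP fw]; exists (swap f); last by rewrite swapK.
by rewrite inE swapC //= ffunE wW fw tpermR.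
Qed.

Lemma card_colourings_off_top w : w \in W ->
  K.+1 * #|[set f in colourings W F K.+1 | f w != ord_max]| = K * #|colourings W F K.+1|.
Proof.
move=> wW; set m := #|[set f in colourings W F K.+1 | f w == ord_max]|.
have cardS (P : pred 'I_K.+1) :
    #|[set f in colourings W F K.+1 | P (f w)]| = #|[pred c | P c]| * m.
  rewrite card_colourings_by_colour_at -sum_nat_const.
  by apply: eq_bigr => c _; apply: card_colourings_colour_at.
have -> : #|colourings W F K.+1| = #|[set f in colourings W F K.+1 | predT (f w)]|.
  by apply: eq_card => f; rewrite inE andbT.
rewrite (cardS (fun c => c != ord_max)) cardS; have -> : #|[pred c : 'I_K.+1 | c != ord_max]| = K.
  by rewrite (@eq_card _ _ (predC1 ord_max)) // cardC1 card_ord.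
by rewrite -[#|[pred c | predT c]|]/#|'I_K.+1| card_ord mulnCA.
Qed.
End TopClass.

Definition restrict (X : {set T}) f : {ffun T -> 'I_K.+1} :=
  [ffun x => if x \in X then f x else ord0].

Lemma restrict_colouring (X : {set T}) W F n f : X \subset W -> f \in colourings W F n ->
  restrict X f \in colourings X (induced_edges F X) n.
Proof.
rewrite !inE => XW /andP [cf sf]; apply/andP; split.
  apply: coloured_onI => [x xX|x /negbTE xX]; rewrite ffunE xX //.
  exact: coloured_on_in cf (subsetP XW x xX).
apply: edges_split_transfer sf => e; rewrite inE => /andP [eF eX].
by split=> // x y xe ye; rewrite !ffunE !(subsetP eX).
Qed.

Lemma card_colouringsU A B F n : [disjoint A & B] ->
  (forall e, e \in F -> (e \subset A) || (e \subset B)) ->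
  #|colourings (A :|: B) F n| =
  #|colourings A (induced_edges F A) n| * #|colourings B (induced_edges F B) n|.
Proof.
move=> dAB FAB; rewrite -cardsX.
pose glue g h : {ffun T -> 'I_K.+1} := [ffun x => if x \in A then g x else h x].
have glueK f : coloured_on (A :|: B) n f -> glue (restrict A f) (restrict B f) = f.
  move=> cf; apply/ffunP => x; rewrite !ffunE.
  case: (boolP (x \in A)) => // xA; case: (boolP (x \in B)) => // xB.
  by rewrite (coloured_on_out cf) // inE negb_or xA xB.
apply: (@eq_card_in_bij _ _ _ _ (fun f => (restrict A f, restrict B f))).
- move=> f1 f2; rewrite !inE => /andP [c1 _] /andP [c2 _] [eA eB].
  by rewrite -(glueK _ c1) -(glueK _ c2) eA eB.
- move=> f fC; rewrite inE (restrict_colouring (subsetUl A B) fC).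
  by rewrite (restrict_colouring (subsetUr A B) fC).
case=> g h; rewrite inE /= !inE => /andP [/andP [cg sg] /andP [ch sh]].
have glueA x : x \in A -> glue g h x = g x by rewrite ffunE => ->.
have glueB x : x \in B -> glue g h x = h x by rewrite ffunE => /(disjointFl dAB) ->.
exists (glue g h); last first.
  congr (_, _); apply/ffunP => x; rewrite ffunE.
    by case: ifP => [/glueA //|/negbT xA]; rewrite (coloured_on_out cg).
  by case: ifP => [/glueB //|/negbT xB]; rewrite (coloured_on_out ch).
rewrite inE; apply/andP; split.
  apply: coloured_onI => x; rewrite inE.
    case/orP => [xA|xB]; first by rewrite glueA // (coloured_on_in cg).
    by rewrite glueB // (coloured_on_in ch).
  rewrite negb_or => /andP [xA xB].
  by rewrite ffunE (negbTE xA) (coloured_on_out ch).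
apply/edges_splitP => e eF; case/orP: (FAB e eF) => eX.
  have /edges_splitP/(_ e) := sg; rewrite inE eF eX => /(_ isT) [x [y [xe ye]]].
  by exists x, y; rewrite !glueA ?(subsetP eX).
have /edges_splitP/(_ e) := sh; rewrite inE eF eX => /(_ isT) [x [y [xe ye]]].
by exists x, y; rewrite !glueB ?(subsetP eX).
Qed.

End Colourings.

Local Open Scope ring_scope.

Section NatInterpolation.
Variable R : numFieldType.
Implicit Types p q : {poly R}.

Lemma poly_eq_on_iota N p q : (size p <= N.+1)%N -> (size q <= N.+1)%N ->
  (forall k, (k <= N)%N -> p.[k%:R] = q.[k%:R]) -> p = q.
Proof.
move=> sp sq pq; apply/eqP; rewrite -subr_eq0; apply/eqP.
apply: (@roots_geq_poly_eq0 _ _ [seq k%:R | k <- iota 0 N.+1]).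
- apply/allP => x /mapP [k]; rewrite mem_iota ltnS => /andP [_ kN] ->.
  by rewrite /root hornerD hornerN pq // subrr.
- by rewrite map_inj_uniq ?iota_uniq // => a b /eqP; rewrite eqr_nat => /eqP.
rewrite size_map size_iota; apply: leq_trans (size_polyD _ _) _.
by rewrite size_polyN geq_max sp sq.
Qed.

Lemma poly_eq_on_nat p q : (forall k, p.[k%:R] = q.[k%:R]) -> p = q.
Proof.
move=> pq; apply: (@poly_eq_on_iota (maxn (size p) (size q))) => //.
  exact: leq_trans (leq_maxl _ _) _.
exact: leq_trans (leq_maxr _ _) _.
Qed.

Definition fallingX d : {poly R} := \prod_(0 <= i < d) ('X - i%:R%:P).

Lemma size_fallingX d : size (fallingX d) = d.+1.
Proof. by rewrite size_prod_XsubC size_iota subn0. Qed.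

Lemma lead_coef_fallingX d : lead_coef (fallingX d) = 1.
Proof. exact: lead_coef_prod_XsubC. Qed.

Lemma fallingX_diff d x :
  (fallingX d.+1).[x + 1] - (fallingX d.+1).[x] = d.+1%:R * (fallingX d).[x].
Proof.
rewrite /fallingX {1}big_nat_recl // big_nat_recr //= !hornerM !hornerXsubC -/(fallingX d).
have -> : (\prod_(0 <= i < d) ('X - i.+1%:R%:P)).[x + 1] = (fallingX d).[x].
  rewrite !horner_prod; apply: eq_bigr => i _.
  by rewrite !hornerXsubC -addn1 natrD opprD addrACA subrr addr0.
by rewrite subr0 [_ * (x - _)]mulrC -mulrBl opprB addrA [x + 1]addrC addrAC addrK addrC natr1.
Qed.

Lemma poly_antidiff N q : (size q <= N)%N ->
  exists2 h : {poly R}, (size h <= N.+1)%N & forall x, h.[x + 1] - h.[x] = q.[x].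
Proof.
elim: N q => [|N IH] q sq.
  exists 0 => [|x]; first by rewrite size_poly0.
  by move: sq; rewrite size_poly_leq0 => /eqP ->; rewrite !horner0 subrr.
set c := q`_N.
have sq' : (size (q - c *: fallingX N)%R <= N)%N.
  apply/leq_sizeP => j; rewrite leq_eqVlt coefB coefZ => /predU1P [<-|Nj].
    have := lead_coef_fallingX N; rewrite /lead_coef size_fallingX => ->.
    by rewrite mulr1 subrr.
  have fj : (fallingX N)`_j = 0 by apply: (leq_sizeP _ N.+1); rewrite ?size_fallingX.
  by rewrite fj (leq_sizeP _ _ sq) // mulr0 subrr.
have [h sh dh] := IH _ sq'.
exists (h + (c / N.+1%:R) *: fallingX N.+1) => [|x].
  apply: leq_trans (size_polyD _ _) _; rewrite geq_max (leq_trans sh) //.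
  by apply: leq_trans (size_scale_leq _ _) _; rewrite size_fallingX.
rewrite !hornerD !hornerZ opprD addrACA -mulrBr fallingX_diff dh.
by rewrite hornerD hornerN hornerZ mulrA divfK ?pnatr_eq0 // subrK.
Qed.

Lemma poly_of_nat_diff N (f : nat -> R) q : (size q <= N)%N ->
  (forall n, f n.+1 - f n = q.[n%:R]) ->
  exists2 p : {poly R}, (size p <= N.+1)%N & forall n, p.[n%:R] = f n.
Proof.
move=> sq df; have [h sh dh] := poly_antidiff sq.
exists (h + (f 0%N - h.[0])%:P) => [|n].
  apply: leq_trans (size_polyD _ _) _; rewrite geq_max sh /=.
  exact: leq_trans (size_polyC_leq1 _) _.
elim: n => [|n IHn]; first by rewrite hornerD hornerC addrC subrK.
move: IHn; rewrite !hornerD !hornerC -natr1 => IHn.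
by rewrite -[h.[_ + 1]](subrK h.[n%:R]) dh -addrA IHn -df subrK.
Qed.

(* [chrompoly V E] unfolds to [lagrange #|V| (fun i => (ncol V E i)%:R)]. *)
Definition lagrange N (c : nat -> R) : {poly R} :=
  \sum_(i < N.+1)
    (c i *: \prod_(j < N.+1 | j != i)
      ((((i : nat)%:R - (j : nat)%:R) : R)^-1 *: ('X - ((j : nat)%:R)%:P))).

Lemma size_lagrange N c : (size (lagrange N c) <= N.+1)%N.
Proof.
apply: (big_ind (fun p : {poly R} => size p <= N.+1)%N) => [|p q sp sq|i _].
- by rewrite size_poly0.
- by apply: leq_trans (size_polyD _ _) _; rewrite geq_max sp sq.
apply: leq_trans (size_scale_leq _ _) _.
rewrite scaler_prod; apply: leq_trans (size_scale_leq _ _) _.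
rewrite -big_filter size_prod_XsubC size_filter.
have -> : count (predC1 i) (index_enum 'I_N.+1) = #|predC1 i|.
  by rewrite cardE /enum_mem size_filter /index_enum unlock.
by rewrite cardC1 card_ord.
Qed.

Lemma lagrange_nat N c k : (k <= N)%N -> (lagrange N c).[k%:R] = c k.
Proof.
rewrite -ltnS => kN; rewrite horner_sum (bigD1 (Ordinal kN)) //= [X in _ + X]big1 ?addr0.
  rewrite hornerZ horner_prod big1 ?mulr1 // => j /= jk.
  rewrite hornerZ hornerXsubC mulVf // subr_eq0 eqr_nat.
  by apply: contra jk => /eqP jk'; apply/eqP/val_inj.
move=> i ik; rewrite hornerZ horner_prod (bigD1 (Ordinal kN)) 1?eq_sym //=.
by rewrite hornerZ hornerXsubC subrr mulr0 mul0r mulr0.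
Qed.

End NatInterpolation.

Lemma dvdp_XsubC_shift (R : idomainType) (a : R) k (p : {poly R}) :
  (('X - a%:P) ^+ k %| p) = ('X ^+ k %| p \Po ('X + a%:P)).
Proof.
apply/idP/idP => [/(dvdp_comp_poly ('X + a%:P))|/(dvdp_comp_poly ('X - a%:P))].
  by rewrite rmorphXn /= comp_polyB comp_polyX comp_polyC addrK.
by rewrite comp_polyXaddC_K rmorphXn /= comp_polyX.
Qed.

Section ChromaticPolynomial.
Variable T : finType.
Implicit Types (W A B : {set T}) (F : {set {set T}}).

Lemma hypergraph_edge_sub W F : hypergraph W F -> forall e, e \in F -> e \subset W.
Proof. by move=> hWF e /hWF []. Qed.

Lemma hypergraph_induced W F A : hypergraph W F -> hypergraph A (induced_edges F A).
Proof. by move=> hWF e; rewrite inE => /andP [/hWF [_ ->] ->]. Qed.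

Lemma card_setD_lt W (V0 : {set T}) : V0 \subset W -> V0 != set0 -> (#|W :\: V0| < #|W|)%N.
Proof.
move=> V0W /set0Pn [x xV0]; apply/proper_card/(sub_proper_trans _ (properD1 (subsetP V0W x xV0))).
by apply: setDS; rewrite sub1set.
Qed.

Lemma ncol_top_class W F (Q : pred {set T}) n : hypergraph W F ->
  #|[set f in colourings n W F n.+1 | Q (top_class W f)]| =
  (\sum_(V0 | indep W F V0 && Q V0) ncol (W :\: V0) (induced_edges F (W :\: V0)) n)%N.
Proof.
move=> hWF; rewrite (card_colourings_by_top_class _ (hypergraph_edge_sub hWF)).
apply: eq_bigr => V0 _.
by rewrite (ncol_colourings (K := n) (hypergraph_edge_sub (hypergraph_induced hWF))).
Qed.

Lemma ncol_succ W F n : hypergraph W F ->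
  ncol W F n.+1 = (\sum_(V0 | indep W F V0) ncol (W :\: V0) (induced_edges F (W :\: V0)) n)%N.
Proof.
move=> hWF; rewrite (ncol_colourings (K := n) (hypergraph_edge_sub hWF)) //.
rewrite (@eq_card _ _ [set f in colourings n W F n.+1 | predT (top_class W f)]) => [|f].
  by rewrite ncol_top_class //; apply: eq_bigl => V0; rewrite andbT.
by rewrite inE andbT.
Qed.

Lemma indep0 W F : hypergraph W F -> indep W F set0.
Proof.
move=> hWF; rewrite /indep sub0set; apply/forallP => e; apply/implyP => /hWF [_].
by rewrite subset0.
Qed.

Lemma induced_edges_id W F : hypergraph W F -> induced_edges F W = F.
Proof.
by move=> hWF; apply/setP => e; rewrite inE andb_idr // => /hWF [].
Qed.

Lemma ncol_succ_sub W F n : hypergraph W F ->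
  (ncol W F n.+1)%:R - (ncol W F n)%:R =
  \sum_(V0 | indep W F V0 && (V0 != set0))
     (ncol (W :\: V0) (induced_edges F (W :\: V0)) n)%:R :> rat.
Proof.
move=> hWF; rewrite ncol_succ // (bigD1 set0) ?indep0 //= natrD natr_sum.
by rewrite setD0 induced_edges_id // addrC addKr.
Qed.

Lemma size_chrompoly W F : (size (chrompoly W F) <= #|W|.+1)%N.
Proof. exact: (@size_lagrange _ #|W| (fun i => (ncol W F i)%:R)). Qed.

Lemma chrompoly_iota W F k : (k <= #|W|)%N -> (chrompoly W F).[k%:R] = (ncol W F k)%:R.
Proof. exact: (@lagrange_nat _ #|W| (fun i => (ncol W F i)%:R)). Qed.

Lemma chrompoly_nat W F n : hypergraph W F -> (chrompoly W F).[n%:R] = (ncol W F n)%:R.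
Proof.
have [m] := ubnP #|W|; elim: m W F n => // m IH W F n ltW hWF.
pose q := \sum_(V0 | indep W F V0 && (V0 != set0))
            chrompoly (W :\: V0) (induced_edges F (W :\: V0)).
have sq : (size q <= #|W|)%N.
  apply: (big_ind (fun p : {poly rat} => size p <= #|W|)%N) => [|p1 p2 s1 s2|V0].
  - by rewrite size_poly0.
  - by apply: leq_trans (size_polyD _ _) _; rewrite geq_max s1 s2.
  by case/andP => /andP [V0W _] V0n; apply: leq_trans (size_chrompoly _ _) (card_setD_lt V0W V0n).
have qn k : (ncol W F k.+1)%:R - (ncol W F k)%:R = q.[k%:R].
  rewrite ncol_succ_sub // horner_sum; apply: eq_bigr => V0 /andP [/andP [V0W _] V0n].
  apply/esym/IH; last exact: hypergraph_induced hWF.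
  by rewrite -ltnS (leq_trans _ ltW) // ltnS card_setD_lt.
have [p sp pn] := poly_of_nat_diff sq qn.
suff -> : chrompoly W F = p by [].
apply: (poly_eq_on_iota (size_chrompoly W F) sp) => k kW.
by rewrite chrompoly_iota // pn.
Qed.

Lemma chrompoly_induced_nat W F A n : hypergraph W F ->
  (chrompoly A (induced_edges F A)).[n%:R] = (ncol A (induced_edges F A) n)%:R.
Proof. by move=> hWF; apply/chrompoly_nat/(hypergraph_induced hWF). Qed.

Lemma chrompoly_shift W F : hypergraph W F ->
  chrompoly W F \Po ('X + 1) =
  \sum_(V0 | indep W F V0) chrompoly (W :\: V0) (induced_edges F (W :\: V0)).
Proof.
move=> hWF; apply: poly_eq_on_nat => n.
rewrite horner_comp hornerD hornerX hornerC natr1 chrompoly_nat // ncol_succ //.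
rewrite natr_sum horner_sum; apply: eq_bigr => V0 _.
by rewrite (chrompoly_induced_nat _ _ hWF).
Qed.

Lemma chrompoly_shift_avoid W F w : hypergraph W F -> w \in W ->
  ('X + 1) * \sum_(V0 | indep W F V0 && (w \notin V0))
                chrompoly (W :\: V0) (induced_edges F (W :\: V0)) =
  'X * (chrompoly W F \Po ('X + 1)).
Proof.
move=> hWF wW; apply: poly_eq_on_nat => n.
rewrite !hornerM !hornerD hornerX hornerC horner_comp hornerD hornerX hornerC natr1.
rewrite chrompoly_nat // horner_sum.
under eq_bigr => V0 _ do rewrite (chrompoly_induced_nat _ _ hWF).
rewrite -natr_sum -!natrM -(ncol_top_class (fun V0 => w \notin V0)) //.
rewrite (ncol_colourings (K := n) (hypergraph_edge_sub hWF)) //.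
rewrite -(card_colourings_off_top n (hypergraph_edge_sub hWF) wW).
by congr (_ * _)%:R; apply: eq_card => f; rewrite !inE wW.
Qed.

Lemma chrompoly_root0 W F : hypergraph W F -> W != set0 -> root (chrompoly W F) 0.
Proof.
move=> hWF /set0Pn [x xW]; rewrite /root -[0]/(0%N%:R : rat) chrompoly_nat //.
rewrite (ncol_colourings (K := 0) (hypergraph_edge_sub hWF)) //.
rewrite pnatr_eq0 cards_eq0; apply/eqP/setP => f; rewrite !inE.
by apply/negbTE/andP => -[/coloured_on_in/(_ xW)].
Qed.

Lemma chrompoly_root1 W F e : hypergraph W F -> e \in F -> root (chrompoly W F) 1.
Proof.
move=> hWF eF; rewrite /root -[1]/(1%N%:R : rat) chrompoly_nat //.
rewrite (ncol_colourings (K := 0) (hypergraph_edge_sub hWF)) //.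
rewrite pnatr_eq0 cards_eq0; apply/eqP/setP => f; rewrite !inE.
apply/negbTE/andP => -[_ /edges_splitP /(_ e eF) [x [y [_ _]]]].
by rewrite (ord1 (f x)) (ord1 (f y)) eqxx.
Qed.

Lemma chrompolyU A B F : hypergraph (A :|: B) F -> [disjoint A & B] ->
  (forall e, e \in F -> (e \subset A) || (e \subset B)) ->
  chrompoly (A :|: B) F = chrompoly A (induced_edges F A) * chrompoly B (induced_edges F B).
Proof.
move=> hF dAB FAB; apply: poly_eq_on_nat => n.
rewrite hornerM chrompoly_nat // !(chrompoly_induced_nat _ _ hF) -natrM.
have [hA hB] := (hypergraph_induced (A := A) hF, hypergraph_induced (A := B) hF).
rewrite !(ncol_colourings (K := n) (hypergraph_edge_sub _)) //.
by rewrite card_colouringsU.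
Qed.

Lemma sqrX_dvdp_chrompolyU A B F : hypergraph (A :|: B) F -> [disjoint A & B] ->
  (forall e, e \in F -> (e \subset A) || (e \subset B)) ->
  A != set0 -> B != set0 -> 'X ^+ 2 %| chrompoly (A :|: B) F.
Proof.
move=> hF dAB FAB An Bn; rewrite chrompolyU // expr2.
have [hA hB] := (hypergraph_induced (A := A) hF, hypergraph_induced (A := B) hF).
by apply: dvdp_mul; rewrite -[X in X %| _]subr0 dvdp_XsubCl chrompoly_root0.
Qed.

Lemma sqrX_dvdp_avoid_sum W F w e : hypergraph W F -> w \in W -> e \in F ->
  'X ^+ 2 %| \sum_(V0 | indep W F V0 && (w \notin V0))
               chrompoly (W :\: V0) (induced_edges F (W :\: V0)).
Proof.
move=> hWF wW eF.
have cop : coprimep ('X ^+ 2) ('X + 1 : {poly rat}).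
  have -> : 'X + 1 = 'X - (-1)%:P :> {poly rat} by rewrite polyCN opprK polyC1.
  by rewrite coprimep_expl // coprimep_XsubC /root hornerX oppr_eq0 oner_eq0.
rewrite -(Gauss_dvdpr _ cop) chrompoly_shift_avoid //.
have /dvdpP [r ->] : 'X %| chrompoly W F \Po ('X + 1).
  rewrite -[X in X %| _]subr0 dvdp_XsubCl /root horner_comp hornerD hornerX hornerC add0r.
  exact: chrompoly_root1 hWF eF.
by rewrite mulrCA -expr2 dvdp_mull.
Qed.

End ChromaticPolynomial.

Section CutVertex.
Variables (T : finType) (V : {set T}) (E : {set {set T}}) (w : T) (V1 V2 : {set T}).
Hypotheses (hVE : hypergraph V E) (UV : V1 :|: V2 = V) (IV : V1 :&: V2 = [set w])
  (Ecut : forall e, e \in E -> [|| w \in e, e \subset V1 | e \subset V2]).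

Lemma sqrX_dvdp_chrompoly_cut (V0 : {set T}) :
  w \in V0 -> ~~ (V1 \subset V0) -> ~~ (V2 \subset V0) ->
  'X ^+ 2 %| chrompoly (V :\: V0) (induced_edges E (V :\: V0)).
Proof.
move=> wV0 nV1 nV2; have VV0 : V :\: V0 = (V1 :\: V0) :|: (V2 :\: V0) by rewrite -UV setDUl.
rewrite [in chrompoly _]VV0; apply: sqrX_dvdp_chrompolyU; rewrite ?setD_eq0 //.
- by rewrite -VV0; apply: hypergraph_induced hVE.
- rewrite -setI_eq0 -setDIl IV; apply/eqP/setP => x; rewrite !inE.
  by apply/andP => -[xV0 /eqP xw]; rewrite xw wV0 in xV0.
move=> e; rewrite inE => /andP [eE /subsetP eVV0].
have we : w \notin e by apply/negP => /eVV0; rewrite inE wV0.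
case/or3P: (Ecut eE) => [/(negP we) []|/subsetP eV|/subsetP eV]; apply/orP; [left|right];
  by apply/subsetP => x xe; rewrite inE eV // andbT; case/setDP: (eVV0 x xe).
Qed.

Lemma sqrX_dvdp_uncut_sum e : e \in E ->
  'X ^+ 2 %| \sum_(V0 | indep V E V0 && ~~ ((V1 \subset V0) || (V2 \subset V0)))
               chrompoly (V :\: V0) (induced_edges E (V :\: V0)).
Proof.
move=> eE; have /andP [wV1 wV2] : (w \in V1) && (w \in V2) by rewrite -in_setI IV set11.
have wV : w \in V by rewrite -UV inE wV1.
rewrite (bigID (fun V0 : {set T} => w \in V0)) /=; apply: dvdp_add.
  apply: (big_ind (fun p : {poly rat} => 'X ^+ 2 %| p)) => [|p q|V0]; first exact: dvdp0.
    exact: dvdp_add.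
  rewrite negb_or => /andP [/andP [_ /andP [nV1 nV2]] wV0].
  exact: sqrX_dvdp_chrompoly_cut.
rewrite (eq_bigl (fun V0 => indep V E V0 && (w \notin V0))) ?(sqrX_dvdp_avoid_sum hVE wV eE) //.
move=> V0; case: (boolP (w \in V0)) => wV0; rewrite ?andbF ?andbT // andb_idr // => _.
by apply/negP => /orP [] /subsetP /(_ w); rewrite (wV1, wV2) (negbTE wV0) => /(_ isT).
Qed.

End CutVertex.

Theorem proposition9 (T : finType) (V : {set T}) (E : {set {set T}})
  (w : T) (V1 V2 : {set T}) :
  hypergraph V E ->
  hconnected V E ->
  w \in V ->
  V1 \proper V -> V2 \proper V ->
  V1 :|: V2 = V ->
  V1 :&: V2 = [set w] ->
  (forall e, e \in E -> [|| w \in e, e \subset V1 | e \subset V2]) ->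
  (('X - 1) ^+ 2 %| chrompoly V E)
  = ('X ^+ 2 %| \sum_(V0 : {set T} | indep V E V0 && ((V1 \subset V0) || (V2 \subset V0)))
                  chrompoly (V :\: V0) (induced_edges E (V :\: V0))).
Proof.
(* Connectivity only supplies an edge. *)
move=> hVE conn wV _ _ UV IV Ecut.
have [e [_ [eE _ _ _ _]]] := conn w w wV wV.
rewrite -polyC1 dvdp_XsubC_shift polyC1 chrompoly_shift //.
rewrite (bigID (fun V0 : {set T} => (V1 \subset V0) || (V2 \subset V0))) /= dvdp_addl //.
exact: sqrX_dvdp_uncut_sum hVE UV IV Ecut e eE.
Qed.
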